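(* Let $D\subseteq[n]\times[n]$ be a diagram. Fix any diagram $C^{(1)}\le D$ and set $\bm{m}=\prod_{j=1}^n\prod_{i\in C^{(1)}_j}x_i$. Let $C^{(1)},\dots,C^{(r)}$ be all the diagrams $C$ with $C\le D$ and $\prod_{j=1}^n\prod_{i\in C_j}x_i=\bm{m}$. Then the coefficient of $\bm{m}$ in $\chi_D$ equals $$\dim\Big(\mathrm{Span}_{\mathbb{C}}\Big\{\prod_{j=1}^n\det\big(Y^{C^{(i)}_j}_{D_j}\big)\ :\ i\in[r]\Big\}\Big).$$
   Context: A diagram $D\subseteq[n]\times[n]$ is a set of boxes $(i,j)$ (row $i$, column $j$), identified with its column sequence $(D_1,\dots,D_n)$, $D_j=\{i:(i,j)\in D\}$. For $R,S\subseteq[n]$, $R\le S$ means $\#R=\#S$ and the $k$-th smallest element of $R$ is at most the $k$-th smallest element of $S$ for each $k$; for diagrams, $C\le D$ means $C_j\le D_j$ for all $j$. Let $Y$ be the $n\times n$ upper-triangular matrix with indeterminates $y_{ij}$ ($i\le j$) and zeros below the diagonal, and $Y^R_S$ its submatrix with rows $R$ and columns $S$ (determinant of the empty matrix is $1$). Let $B$ be the group of invertible upper-triangular complex $n\times n$ matrices acting on $\mathbb{C}[Y]$ by $(f\cdot b)(Y)=f(b^{-1}Y)$. The flagged Weyl module is $\mathcal{M}_D=\mathrm{Span}_{\mathbb{C}}\{\prod_{j=1}^n\det(Y^{C_j}_{D_j}): C\le D\}$, a $B$-module. For a $B$-module $N$, $\mathrm{char}(N)(x_1,\dots,x_n)$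 is the trace of $\mathrm{diag}(x_1,\dots,x_n)$ acting on $N$, and the dual character is $\mathrm{char}^*(N)(x_1,\dots,x_n)=\mathrm{char}(N)(x_1^{-1},\dots,x_n^{-1})$. Set $\chi_D=\mathrm{char}^*\mathcal{M}_D$. *)

From mathcomp Require Import all_boot all_algebra.
From mathcomp Require Import complex.
From mathcomp Require Import Rstruct.
From mathcomp Require Import mpoly.

Set Implicit Arguments.
Unset Strict Implicit.
Unset Printing Implicit Defensive.

Import GRing.Theory.
Local Open Scope ring_scope.

Definition CC : fieldType := (Rdefinitions.R)[i].

Section LinAlg.
Variables (K : fieldType) (V : lmodType K).

Definition span_of (s : seq V) (f : V) : Prop :=
  exists c : 'I_(size s) -> K, f = \sum_(i < size s) c i *: s`_i.

Definition lin_indep (b : seq V) : Prop :=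
  forall c : 'I_(size b) -> K,
    \sum_(i < size b) c i *: b`_i = 0 -> forall i, c i = 0.

Definition is_basis (W : V -> Prop) (b : seq V) : Prop :=
  lin_indep b /\ forall f, W f <-> span_of b f.

Definition has_dim (W : V -> Prop) (d : nat) : Prop :=
  exists b, size b = d /\ is_basis W b.

Definition has_trace (W : V -> Prop) (L : V -> V) (tr : K) : Prop :=
  exists b, is_basis W b /\
    exists A : 'M[K]_(size b),
      (forall k : 'I_(size b), L b`_k = \sum_(l < size b) A k l *: b`_l)
      /\ tr = \tr A.
End LinAlg.

(* A diagram D in [n]x[n], given by its column sequence j |-> D_j.
   (Indices 0..n-1 stand for 1..n.) *)
Definition diagram (n : nat) := {ffun 'I_n -> {set 'I_n}}.

(* The elements of R in increasing order (enum of a finset of 'I_n is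
   increasing since it follows the enumeration 0,1,...,n-1). *)
Definition svals n (R : {set 'I_n}) : seq nat := [seq val i | i <- enum R].

Definition leset n (R S : {set 'I_n}) : bool :=
  (#|R| == #|S|) &&
  [forall k : 'I_#|R|, nth 0%N (svals R) k <= nth 0%N (svals S) k]%N.

Definition lediag n (C D : diagram n) : bool := [forall j, leset (C j) (D j)].

(* C[Y]: polynomials in the variables y_ij, indexed by (i,j) via
   mxvec_index i j : 'I_(n*n).  Only the y_ij with i <= j occur in Y. *)
Notation polyY n := {mpoly CC[n * n]}.

Definition Ymx (n : nat) : 'M[polyY n]_n :=
  \matrix_(i, j) (if (i <= j)%N then 'X_(mxvec_index i j) else 0).

(* det (Y^R_S): rows R and columns S (both listed increasingly); only
   used when #|R| = #|S|.  The determinant of the 0x0 matrix is 1. *)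
Definition minorY n (R S : {set 'I_n}) : polyY n :=
  \det (\matrix_(k < #|S|, l < #|S|)
          Ymx n (nth (@enum_val _ (mem S) l) (enum R) k) (@enum_val _ (mem S) l)).

Definition genY n (C D : diagram n) : polyY n :=
  \prod_(j < n) minorY (C j) (D j).

Definition diagrams_le n (D : diagram n) : seq (diagram n) :=
  [seq C <- enum [set: diagram n] | lediag C D].

Definition weylM n (D : diagram n) : polyY n -> Prop :=
  span_of [seq genY C D | C <- diagrams_le D].

Definition actB n (b : 'M[CC]_n) (f : polyY n) : polyY n :=
  let Z := map_mx (fun c : CC => c%:MP) (invmx b) *m Ymx n in
  f \mPo [tuple (mxvec Z) 0 v | v < n * n].

(* P (a polynomial in x_1..x_n) is the dual character of the B-module N:
   for all x in (C^x)^n (all x_i nonzero),  P(x) = char(N)(x^{-1}) = trace of diag(x^{-1})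
   acting on N. *)
Definition is_dual_char n (N : polyY n -> Prop) (P : {mpoly CC[n]}) : Prop :=
  forall x : 'I_n -> CC, (forall i, x i != 0) ->
    has_trace N (actB (diag_mx (\row_i (x i)^-1))) P.@[x].

Definition monoC n (C : diagram n) : {mpoly CC[n]} :=
  \prod_(j < n) \prod_(i in C j) 'X_i.

(* Coefficient of the monomial m (= 'X_[e], whose exponent e = mlead m)
   in P. *)
Definition coef_mon n (P m : {mpoly CC[n]}) : CC := P@_(mlead m).

(* The torus of invertible diagonal matrices acts diagonally on the generators
   of M_D: substituting y_ij -> x_i y_ij scales a minor with row set R by
   prod_(i in R) x_i, so prod_j det(Y^{C_j}_{D_j}) is a weight vector of weight
   m_C = prod_j prod_(i in C_j) x_i.  A basis of M_D extracted from the generators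
   is therefore a weight basis, and the dual character is the sum of the weights
   of its elements; it is unique because a polynomial vanishing on the torus is
   zero (independence of characters).  The coefficient of m counts the basis
   elements of weight m, and these form a basis of the span W of the generators
   of weight m, since every relation among weight vectors splits weight by
   weight. *)

From HB Require Import structures.
From mathcomp Require Import all_boot all_algebra.
From mathcomp Require Import complex.
From mathcomp Require Import Rstruct.
From mathcomp Require Import mpoly.
From Stdlib Require Import ClassicalEpsilon.
From mathcomp Require Import ring.
Set Implicit Arguments.
Unset Strict Implicit.
Unset Printing Implicit Defensive.

Import GRing.Theory Num.Theory.
Local Open Scope ring_scope.

Section FiniteFamilies.
Variables (K : fieldType) (V : lmodType K).
Implicit Types (s t b e : seq V) (W : V -> Prop).

Lemma span_of0 s : span_of s 0.
Proof. by exists (fun _ => 0); rewrite big1 // => i _; rewrite scale0r. Qed.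

Lemma span_ofD s u v : span_of s u -> span_of s v -> span_of s (u + v).
Proof.
move=> [c1 ->] [c2 ->]; exists (fun i => c1 i + c2 i).
by rewrite -big_split; apply: eq_bigr => i _; rewrite scalerDl.
Qed.

Lemma span_ofZ s a u : span_of s u -> span_of s (a *: u).
Proof.
move=> [c ->]; exists (fun i => a * c i).
by rewrite scaler_sumr; apply: eq_bigr => i _; rewrite scalerA.
Qed.

Lemma span_of_sum s (I : Type) (r : seq I) (P : pred I) (F : I -> V) :
  (forall i, P i -> span_of s (F i)) -> span_of s (\sum_(i <- r | P i) F i).
Proof. by move=> sF; apply: big_ind => //; [apply: span_of0 | apply: span_ofD]. Qed.

Lemma sum_scale_delta s (i : 'I_(size s)) :
  \sum_j (1%:M : 'M[K]_(size s)) i j *: s`_j = s`_i.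
Proof.
rewrite (bigD1 i) //= mxE eqxx scale1r big1 ?addr0 // => j /negbTE ji.
by rewrite mxE eq_sym ji scale0r.
Qed.

Lemma mem_span_of s x : x \in s -> span_of s x.
Proof.
move=> sx; have ix : (index x s < size s)%N by rewrite index_mem.
exists (fun j => (1%:M : 'M[K]_(size s)) (Ordinal ix) j).
by rewrite sum_scale_delta nth_index.
Qed.

Lemma span_of_trans s t f :
  (forall y, y \in s -> span_of t y) -> span_of s f -> span_of t f.
Proof. by move=> st [c ->]; apply: span_of_sum => i _; apply/span_ofZ/st/mem_nth. Qed.

Lemma span_of_subset s t f : {subset s <= t} -> span_of s f -> span_of t f.
Proof. by move=> st; apply: span_of_trans => y /st /mem_span_of. Qed.

Lemma sum_scale_cons x s (a : K) (c : 'I_(size s) -> K) :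
  \sum_(j < size (x :: s)) (if unlift ord0 j is Some i then c i else a) *: (x :: s)`_j
  = a *: x + \sum_i c i *: s`_i.
Proof. by rewrite big_ord_recl unlift_none; under eq_bigr do rewrite liftK. Qed.

Lemma lin_indep_cons x s : lin_indep (x :: s) <-> ~ span_of s x /\ lin_indep s.
Proof.
split=> [indep_xs | [not_sx indep_s] c].
  split=> [[c sx] | c sc0 i].
    have sum0 : \sum_(j < size (x :: s))
        (if unlift ord0 j is Some i then c i else -1) *: (x :: s)`_j = 0.
      by rewrite sum_scale_cons -sx scaleN1r addNr.
    by have := indep_xs _ sum0 ord0; rewrite unlift_none => /eqP; rewrite oppr_eq0 oner_eq0.
  have sum0 : \sum_(j < size (x :: s))
      (if unlift ord0 j is Some i then c i else 0) *: (x :: s)`_j = 0.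
    by rewrite sum_scale_cons sc0 scale0r addr0.
  by have := indep_xs _ sum0 (lift ord0 i); rewrite liftK.
rewrite big_ord_recl => /= sc0.
have c0 : c ord0 = 0.
  apply/eqP; apply: contraT => c0_neq0; case: not_sx.
  have -> : x = \sum_i (- (c ord0)^-1 * c (lift ord0 i)) *: s`_i.
    apply: (scalerI c0_neq0); rewrite scaler_sumr.
    under eq_bigr do rewrite scalerA mulrA mulrN mulfV // mulN1r scaleNr.
    by rewrite sumrN; apply/eqP; rewrite -addr_eq0 sc0.
  by apply: span_of_sum => i _; apply/span_ofZ/mem_span_of/mem_nth.
move: sc0; rewrite c0 scale0r add0r => /indep_s c_lift0 j.
by case: (unliftP ord0 j) => [i ->|->].
Qed.

Lemma lin_indep_subseq s t : subseq s t -> lin_indep t -> lin_indep s.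
Proof.
elim: t s => [|y t IHt] [|x s] //=; try by move=> _ _ c _ [].
case: eqP => [-> st | _ yst] /lin_indep_cons [not_ty indep_t]; last exact: IHt.
apply/lin_indep_cons; split; last exact: IHt.
by move/(span_of_subset (mem_subseq st)).
Qed.

Lemma exists_basis_subseq (T : eqType) (g : T -> V) (r : seq T) :
  exists2 E, subseq E r & is_basis (span_of (map g r)) (map g E).
Proof.
elim: r => [|t r [E sEr [indep_E span_E]]]; first by exists [::] => //; split=> // c _ [].
have span_sub (f : V) u y : y \in u -> span_of (f :: u) y.
  by move=> uy; apply: mem_span_of; rewrite inE uy orbT.
have [sEt | not_sEt] := classic (span_of (map g E) (g t)).
  exists E; first exact: subseq_trans sEr (subseq_cons r t).
  split=> // f; split=> [|/span_E]; last exact: span_of_trans (span_sub _ _).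
  by apply: span_of_trans => y; rewrite inE => /predU1P [-> | /mem_span_of/span_E].
exists (t :: E); first by rewrite /= eqxx.
split; first exact/lin_indep_cons.
have span_cons u v : (forall f, span_of u f -> span_of v f) ->
    forall f, span_of (g t :: u) f -> span_of (g t :: v) f.
  move=> uv f; apply: span_of_trans => y; rewrite inE => /predU1P [-> | /mem_span_of/uv].
    exact: mem_span_of (mem_head _ _).
  exact: span_of_trans (span_sub _ _).
by move=> f; split; apply: span_cons => {}f /span_E.
Qed.

Lemma lin_indep_coef_eq b (c d : 'I_(size b) -> K) : lin_indep b ->
  \sum_i c i *: b`_i = \sum_i d i *: b`_i -> c =1 d.
Proof.
move=> indep_b cd i; apply/eqP; rewrite -subr_eq0; apply/eqP.
apply: (indep_b (fun i => c i - d i)).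
by under eq_bigr do rewrite scalerBl; rewrite sumrB cd subrr.
Qed.

Lemma sum_scale_sum m p (t : 'I_m -> K) (S : 'M[K]_(m, p)) (g : 'I_p -> V) :
  \sum_k t k *: \sum_l S k l *: g l = \sum_l (\sum_k t k * S k l) *: g l.
Proof.
under eq_bigr do rewrite scaler_sumr; rewrite exchange_big.
by apply: eq_bigr => l _; rewrite scaler_suml; apply: eq_bigr => k _; rewrite scalerA.
Qed.

Lemma span_of_mx m e (f : 'I_m -> V) : (forall k, span_of e (f k)) ->
  exists S : 'M[K]_(m, size e), forall k, f k = \sum_l S k l *: e`_l.
Proof.
move=> span_f; pose c k := constructive_indefinite_description _ (span_f k).
exists (\matrix_(k, l) sval (c k) l) => k.
by under eq_bigr do rewrite mxE; exact: (svalP (c k)).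
Qed.

Lemma mulmx_eq1_lin_indep e m (f : 'I_m -> V) (S : 'M[K]_(m, size e))
    (T : 'M[K]_(size e, m)) : lin_indep e ->
  (forall k, f k = \sum_l S k l *: e`_l) ->
  (forall l : 'I_(size e), e`_l = \sum_k T l k *: f k) ->
  T *m S = 1%:M.
Proof.
move=> indep_e fS eT; apply/matrixP => l j; rewrite mxE.
have := eT l; under eq_bigr do rewrite fS.
by rewrite sum_scale_sum -{1}sum_scale_delta => /lin_indep_coef_eq ->.
Qed.

Lemma basis_change W b e : is_basis W b -> is_basis W e ->
  exists S : 'M[K]_(size b, size e), exists T : 'M[K]_(size e, size b),
  [/\ S *m T = 1%:M, T *m S = 1%:M,
      forall k : 'I_(size b), b`_k = \sum_l S k l *: e`_l &
      forall l : 'I_(size e), e`_l = \sum_k T l k *: b`_k].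
Proof.
move=> [indep_b span_b] [indep_e span_e].
have [S bS] : exists S : 'M[K]_(size b, size e),
    forall k : 'I_(size b), b`_k = \sum_l S k l *: e`_l.
  by apply: span_of_mx => k; apply/span_e/span_b/mem_span_of/mem_nth.
have [T eT] : exists T : 'M[K]_(size e, size b),
    forall l : 'I_(size e), e`_l = \sum_k T l k *: b`_k.
  by apply: span_of_mx => l; apply/span_b/span_e/mem_span_of/mem_nth.
exists S, T; split=> //.
  exact: mulmx_eq1_lin_indep eT bS.
exact: mulmx_eq1_lin_indep bS eT.
Qed.

Lemma is_basis_sizeR W b e : is_basis W b -> is_basis W e ->
  (size b)%:R = (size e)%:R :> K.
Proof.
move=> basis_b basis_e; have [S [T [ST TS _ _]]] := basis_change basis_b basis_e.
by rewrite -!mxtrace1 -ST -TS mxtrace_mulC.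
Qed.

Lemma has_trace_eigenbasis W (L : V -> V) b (d : 'I_(size b) -> K) :
  is_basis W b -> (forall k : 'I_(size b), L b`_k = d k *: b`_k) ->
  has_trace W L (\sum_k d k).
Proof.
move=> basis_b Lb; exists b; split=> //; exists (diag_mx (\row_k d k)); split.
  move=> k; rewrite Lb (bigD1 k) //= !mxE eqxx mulr1n big1 ?addr0 // => l /negbTE lk.
  by rewrite !mxE eq_sym lk mulr0n scale0r.
by rewrite mxtrace_diag; apply: eq_bigr => k _; rewrite mxE.
Qed.

Lemma has_trace_eigenbasisE W (L : {linear V -> V}) b (d : 'I_(size b) -> K) tr :
  is_basis W b -> (forall k : 'I_(size b), L b`_k = d k *: b`_k) -> has_trace W L tr ->
  tr = \sum_k d k.
Proof.
move=> basis_b Lb [e [basis_e [A [Le ->]]]].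
have [S [T [_ TS eS bT]]] := basis_change basis_e basis_b.
have -> : A = S *m diag_mx (\row_l d l) *m T.
  apply/matrixP => k j; have := Le k; rewrite eS linear_sum.
  under eq_bigr do rewrite linearZ /= Lb scalerA bT.
  rewrite sum_scale_sum => /esym/(lin_indep_coef_eq basis_e.1) ->.
  by rewrite mxE; apply: eq_bigr => l _; rewrite mul_mx_diag !mxE.
by rewrite mxtrace_mulC mulmxA TS mul1mx mxtrace_diag; apply: eq_bigr => l _; rewrite mxE.
Qed.
End FiniteFamilies.

Section TorusCharacters.
Variables (F : numDomainType) (n : nat).
Implicit Types (x y : 'I_n -> F) (m : 'X_{1..n}).

Lemma mmap1M x y m : mmap1 (fun i => x i * y i) m = mmap1 x m * mmap1 y m.
Proof. by rewrite /mmap1 -big_split; apply: eq_bigr => i _; rewrite exprMn. Qed.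

Lemma mmap1_separate m1 m2 : m1 != m2 ->
  exists2 y : 'I_n -> F, (forall i, y i != 0) & mmap1 y m1 != mmap1 y m2.
Proof.
move=> m12; have [i m12_i] : exists i, m1 i != m2 i.
  apply/existsP; apply: contraR m12 => /existsPn m12_eq.
  by apply/eqP/mnmP => i; apply/eqP/negPn.
pose y j : F := if j == i then 2 else 1.
have mmap1_y m : mmap1 y m = 2 ^+ m i.
  rewrite /mmap1 (bigD1 i) //= /y eqxx big1 ?mulr1 // => j /negbTE ->.
  by rewrite expr1n.
exists y => [j | ]; first by rewrite /y; case: (j == i); rewrite ?pnatr_eq0 ?oner_eq0.
by rewrite !mmap1_y -!natrX eqr_nat eqn_exp2l.
Qed.

Lemma mmap1_lin_indep (s : seq 'X_{1..n}) (c : 'X_{1..n} -> F) : uniq s ->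
  (forall x, (forall i, x i != 0) -> \sum_(m <- s) c m * mmap1 x m = 0) ->
  forall m, m \in s -> c m = 0.
Proof.
elim: s c => [|m1 s IHs] c //= /andP [m1_notin_s uniq_s] sum0.
have c_s m : m \in s -> c m = 0.
  move=> sm; have m1m : m1 != m by apply: contraNneq m1_notin_s => ->.
  have [y y_neq0 y_sep] := mmap1_separate m1m.
  suff /IHs : forall x, (forall i, x i != 0) ->
      \sum_(m <- s) c m * (mmap1 y m - mmap1 y m1) * mmap1 x m = 0.
    move=> /(_ uniq_s m sm) /eqP.
    by rewrite mulf_eq0 subr_eq0 [mmap1 y m == _]eq_sym (negbTE y_sep) orbF => /eqP.
  move=> x x_neq0.
  have := sum0 _ (fun i => mulf_neq0 (x_neq0 i) (y_neq0 i)).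
  have := sum0 _ x_neq0.
  rewrite !big_cons => /eqP; rewrite addrC addr_eq0 => /eqP sum_x.
  move=> /eqP; rewrite addrC addr_eq0 => /eqP sum_xy.
  have -> : \sum_(m <- s) c m * (mmap1 y m - mmap1 y m1) * mmap1 x m =
      \sum_(m <- s) c m * mmap1 (fun i => x i * y i) m
      - mmap1 y m1 * \sum_(m <- s) c m * mmap1 x m.
    by rewrite mulr_sumr -sumrB; apply: eq_bigr => m' _; rewrite mmap1M; ring.
  by rewrite sum_xy sum_x mmap1M; ring.
move=> m; rewrite inE => /predU1P [-> | /c_s //].
have := sum0 _ (fun _ => oner_neq0 F); rewrite big_cons big_seq big1 => [|m' /c_s ->].
  by rewrite addr0 /mmap1 big1 ?mulr1 // => i _; rewrite expr1n.
by rewrite mul0r.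
Qed.

Lemma meval_units_inj (p q : {mpoly F[n]}) :
  (forall x, (forall i, x i != 0) -> p.@[x] = q.@[x]) -> p = q.
Proof.
move=> pq; apply/eqP; rewrite -subr_eq0; apply/eqP/mpolyP => m; rewrite mcoeff0.
have [pm | /memN_msupp_eq0 //] := boolP (m \in msupp (p - q)).
apply: (mmap1_lin_indep (c := fun m => (p - q)@_m) (msupp_uniq (p - q)) _ pm) => x x_neq0.
by rewrite -mevalE mevalB pq // subrr.
Qed.
End TorusCharacters.

Lemma big_nth_ord (R : Type) (idx : R) (op : Monoid.law idx) (I : Type) (s : seq I)
    N (d : 'I_N -> I) (F : I -> R) :
  N = size s -> \big[op/idx]_(k < N) F (nth (d k) s k) = \big[op/idx]_(i <- s) F i.
Proof.
elim: s N d => [|i s IHs] N d eN; subst N; first by rewrite big_ord0 big_nil.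
by rewrite big_ord_recl big_cons (IHs _ (fun k => d (lift ord0 k))).
Qed.

Lemma invmx_diag (F : fieldType) n (d : 'rV[F]_n) : (forall i, d 0 i != 0) ->
  invmx (diag_mx d) = diag_mx (\row_i (d 0 i)^-1).
Proof.
move=> d_neq0; have dd : diag_mx d *m diag_mx (\row_i (d 0 i)^-1) = 1%:M.
  by rewrite mulmx_diag -diag_const_mx; congr diag_mx; apply/rowP => i; rewrite !mxE mulfV.
have [d_unit _] := mulmx1_unit dd.
by rewrite -[RHS]mul1mx -(mulVmx d_unit) -mulmxA dd mulmx1.
Qed.

Lemma mpolyX_eq (R : nzRingType) n (a b : 'X_{1..n}) :
  ('X_[a] == 'X_[b] :> {mpoly R[n]}) = (a == b).
Proof. by apply/eqP/eqP => [ab | -> //]; rewrite -(mleadXm R a) ab mleadXm. Qed.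

Lemma mcoeff_sum_mpolyX (R : nzRingType) n (T : Type) (r : seq T) (w : T -> 'X_{1..n}) e :
  (\sum_(t <- r) 'X_[w t] : {mpoly R[n]})@_e = (count (fun t => w t == e) r)%:R.
Proof.
rewrite raddf_sum -sum1_count natr_sum [RHS]big_mkcond /=.
by apply: eq_bigr => t _; rewrite mcoeffX; case: eqP.
Qed.

Lemma actB_is_linear n (b : 'M[CC]_n) : linear (actB b).
Proof. by move=> a f g; rewrite /actB comp_mpolyD comp_mpolyZ. Qed.

HB.instance Definition _ n (b : 'M[CC]_n) :=
  GRing.isLinear.Build CC (polyY n) (polyY n) *:%R (actB b) (actB_is_linear b).

Definition weight_vector n (e : 'X_{1..n}) (f : polyY n) : Prop :=
  forall x : 'I_n -> CC, (forall i, x i != 0) ->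
    actB (diag_mx (\row_i (x i)^-1)) f = 'X_[e].@[x] *: f.

Definition diagram_exp n (C : diagram n) : 'X_{1..n} := (\sum_j \sum_(i in C j) U_(i))%MM.

Lemma monoC_mpolyX n (C : diagram n) : monoC C = 'X_[diagram_exp C].
Proof.
rewrite /diagram_exp (big_morph _ (@mpolyXD _ _) (mpolyX0 _ _)).
by apply: eq_bigr => j _; rewrite (big_morph _ (@mpolyXD _ _) (mpolyX0 _ _)).
Qed.

Section DiagonalAction.
Variables (n : nat) (x : 'I_n -> CC).
Hypothesis x_neq0 : forall i, x i != 0.

Let scaled_vars := [tuple mxvec (\matrix_(i, j) ((x i)%:MP * Ymx n i j)) 0 v | v < n * n].

Lemma actB_diag_inv f : actB (diag_mx (\row_i (x i)^-1)) f = f \mPo scaled_vars.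
Proof.
rewrite /actB invmx_diag => [|i]; last by rewrite mxE invr_eq0.
congr (f \mPo _); apply: eq_from_tnth => v; rewrite !tnth_mktuple.
congr (mxvec _ 0 v); apply/matrixP => i j; rewrite !mxE (bigD1 i) //= big1 ?addr0.
  by rewrite !mxE eqxx mulr1n invrK.
by move=> k /negbTE ki; rewrite !mxE eq_sym ki mulr0n mpolyC0 mul0r.
Qed.

Lemma Ymx_comp i j : Ymx n i j \mPo scaled_vars = (x i)%:MP * Ymx n i j.
Proof.
rewrite [Ymx n i j]mxE; case: ifP => ij; last by rewrite comp_mpoly0 mulr0.
by rewrite comp_mpolyXU -tnth_nth tnth_mktuple mxvecE !mxE ij.
Qed.

Lemma minorY_comp (R S : {set 'I_n}) : #|R| = #|S| ->
  minorY R S \mPo scaled_vars = (\prod_(i in R) (x i)%:MP) * minorY R S.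
Proof.
move=> RS; rewrite /minorY -det_map_mx.
set M := \matrix_(k, l) _.
have -> : map_mx (comp_mpoly scaled_vars) M =
    diag_mx (\row_k (x (nth (enum_val k) (enum R) k))%:MP) *m M.
  apply/matrixP => k l.
  rewrite mul_diag_mx [LHS]mxE [RHS]mxE [M k l]mxE Ymx_comp [(\row__ _) 0 k]mxE.
  by rewrite (set_nth_default (enum_val k) (enum_val l)) // -cardE RS.
rewrite det_mulmx det_diag; under eq_bigr do rewrite mxE.
by rewrite (big_nth_ord _ _ (fun i => (x i)%:MP)) ?big_enum // -cardE RS.
Qed.

Lemma actB_diag_genY (C D : diagram n) : lediag C D ->
  actB (diag_mx (\row_i (x i)^-1)) (genY C D) = 'X_[diagram_exp C].@[x] *: genY C D.
Proof.
move=> /forallP CD.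
rewrite actB_diag_inv -monoC_mpolyX -mul_mpolyC /genY /monoC !rmorph_prod -big_split.
apply: eq_bigr => j _; have /andP [/eqP CDj _] := CD j.
rewrite /= minorY_comp // !rmorph_prod; congr (_ * _).
by apply: eq_bigr => i _; rewrite /= mevalXU.
Qed.
End DiagonalAction.

Lemma weight_vector_genY n (C D : diagram n) :
  lediag C D -> weight_vector (diagram_exp C) (genY C D).
Proof. by move=> CD x x_neq0; apply: actB_diag_genY. Qed.

Lemma weight_vectorZ n (e : 'X_{1..n}) a f : weight_vector e f -> weight_vector e (a *: f).
Proof. by move=> wt_f x x_neq0; rewrite linearZ /= wt_f // !scalerA mulrC. Qed.

Lemma weight_component n (I : Type) (r : seq I) (w : I -> 'X_{1..n})
    (f : I -> polyY n) e v :
  weight_vector e v -> (forall i, weight_vector (w i) (f i)) ->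
  v = \sum_(i <- r) f i -> v = \sum_(i <- r | w i == e) f i.
Proof.
move=> wt_v wt_f vf; apply/mpolyP => mu.
pose q : {mpoly CC[n]} := v@_mu *: 'X_[e] - \sum_(i <- r) (f i)@_mu *: 'X_[w i].
have q0 : q = 0.
  apply: meval_units_inj => x x_neq0.
  have vx : v@_mu * 'X_[e].@[x] = \sum_(i <- r) (f i)@_mu * 'X_[w i].@[x].
    rewrite mulrC -mcoeffZ -wt_v // {1}vf (linear_sum (actB _)) raddf_sum.
    by apply: eq_bigr => i _; rewrite /= wt_f // mcoeffZ mulrC.
  rewrite meval0 mevalB mevalZ vx rmorph_sum /=.
  by under [X in _ - X]eq_bigr do rewrite mevalZ; rewrite subrr.
move: (congr1 (mcoeff e) q0); rewrite mcoeffB mcoeffZ mcoeffX eqxx mulr1 mcoeff0.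
move/eqP; rewrite subr_eq0 => /eqP ->; rewrite !raddf_sum [RHS]big_mkcond /=.
apply: eq_bigr => i _; rewrite mcoeffZ mcoeffX.
by case: eqP; rewrite ?mulr1 ?mulr0 ?mcoeff0.
Qed.

Lemma basis_filter_weight n (T : eqType) (g : T -> polyY n) (w : T -> 'X_{1..n})
    (r E : seq T) e :
  subseq E r -> is_basis (span_of (map g r)) (map g E) ->
  {in r, forall t, weight_vector (w t) (g t)} ->
  is_basis (span_of (map g [seq t <- r | w t == e])) (map g [seq t <- E | w t == e]).
Proof.
move=> sEr [indep_E span_E] wt_g.
split=> [|f]; first exact: lin_indep_subseq (map_subseq g (filter_subseq _ E)) indep_E.
split; apply: span_of_trans => y /mapP [t]; rewrite mem_filter => /andP [/eqP wt_e rt] ->;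
  last by apply/mem_span_of/map_f; rewrite mem_filter wt_e eqxx (mem_subseq sEr).
have [c gt] : span_of (map g E) (g t) by apply/span_E/mem_span_of/map_f.
have {}gt : g t = \sum_(k < size (map g E)) c k *: g (nth t E k).
  by rewrite gt; apply: eq_bigr => k _; rewrite (nth_map t) // -(size_map g).
have wt_Ek (k : 'I_(size (map g E))) : weight_vector (w (nth t E k)) (c k *: g (nth t E k)).
  have kE : (k < size E)%N by rewrite -(size_map g).
  by apply/weight_vectorZ/wt_g/(mem_subseq sEr)/mem_nth.
rewrite (weight_component (wt_g t rt) wt_Ek gt) wt_e.
apply: span_of_sum => k /eqP wt_k; apply/span_ofZ/mem_span_of/map_f.
by rewrite mem_filter wt_k eqxx mem_nth // -(size_map g).
Qed.

Lemma is_dual_char_basisE n (T : eqType) (t0 : T) (g : T -> polyY n)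
    (w : T -> 'X_{1..n}) (N : polyY n -> Prop) (E : seq T) :
  is_basis N (map g E) -> {in E, forall t, weight_vector (w t) (g t)} ->
  forall P, is_dual_char N P <-> P = \sum_(t <- E) 'X_[w t].
Proof.
move=> basis_E wt_E.
have eigen (x : 'I_n -> CC) : (forall i, x i != 0) -> forall k : 'I_(size (map g E)),
    actB (diag_mx (\row_i (x i)^-1)) (map g E)`_k =
    'X_[w (nth t0 E k)].@[x] *: (map g E)`_k.
  move=> x_neq0 k; have kE : (k < size E)%N by rewrite -(size_map g).
  by rewrite (nth_map t0) // wt_E ?mem_nth.
have sum_eval (x : 'I_n -> CC) : (\sum_(t <- E) 'X_[w t]).@[x] =
    \sum_(k < size (map g E)) 'X_[w (nth t0 E k)].@[x].
  by rewrite rmorph_sum (big_nth t0) size_map big_mkord.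
move=> P; split=> [charP | -> x x_neq0]; last first.
  by rewrite sum_eval; apply: has_trace_eigenbasis basis_E (eigen x x_neq0).
apply: meval_units_inj => x x_neq0; rewrite sum_eval.
exact: has_trace_eigenbasisE basis_E (eigen x x_neq0) (charP x x_neq0).
Qed.

Theorem corollary5p5 (n : nat) (D C1 : diagram n) :
  lediag C1 D ->
  let m := monoC C1 in
  let Cs := [seq C <- diagrams_le D | monoC C == m] in
  let W := span_of [seq genY C D | C <- Cs] in
  (exists P, is_dual_char (weylM D) P) /\
  (exists d, has_dim W d) /\
  (forall (P : {mpoly CC[n]}) (d : nat),
     is_dual_char (weylM D) P -> has_dim W d -> coef_mon P m = d%:R).
Proof.
move=> _ m Cs W; set g := fun C => genY C D.
have wt_D : {in diagrams_le D, forall C, weight_vector (diagram_exp C) (g C)}.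
  by move=> C; rewrite mem_filter => /andP [CD _]; apply: weight_vector_genY.
have [E sED basis_E] := exists_basis_subseq g (diagrams_le D).
have dual_charE := is_dual_char_basisE C1 basis_E (sub_in1 (mem_subseq sED) wt_D).
have CsE : Cs = [seq C <- diagrams_le D | diagram_exp C == diagram_exp C1].
  by apply: eq_filter => C; rewrite /m !monoC_mpolyX mpolyX_eq.
have basis_W := basis_filter_weight (diagram_exp C1) sED basis_E wt_D.
rewrite -CsE in basis_W.
split; first by eexists; apply/dual_charE.
split; first by eexists; exists (map g [seq C <- E | diagram_exp C == diagram_exp C1]).
move=> P d /dual_charE -> [b [<- basis_b]].
rewrite /coef_mon /m monoC_mpolyX mleadXm mcoeff_sum_mpolyX -size_filter.
by rewrite (is_basis_sizeR basis_b basis_W) size_map.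
Qed.
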